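(* Let $(X,d)$ be a compact metric space and let $f_1,f_2:X\to X$ be continuous. Suppose there is $c\in X$ with $f_1(x)=c$ for all $x\in X$, $f_2(c)=c$, and $f_2$ is Kato chaotic. Then the multiple mapping $F=\{f_1,f_2\}$ is (Hausdorff metric) Kato chaotic.
   Context: A continuous $f:X\to X$ is sensitive if there is $\delta>0$ such that for every nonempty open $U\subset X$ there exist $x,y\in U$, $n\in\mathbb{Z}^+$ with $d(f^n(x),f^n(y))>\delta$; accessible if for every $\epsilon>0$ and all nonempty open $U,V\subset X$ there exist $x\in U,y\in V,n\in\mathbb{Z}^+$ with $d(f^n(x),f^n(y))<\epsilon$; Kato chaotic if sensitive and accessible. For $F=\{f_1,f_2\}$ and $n\ge1$, $F^n(x)=\{f_{i_1}\cdots f_{i_n}(x)\mid i_1,\dots,i_n\in\{1,2\}\}$, and $d_H(A,B)=\max\{\sup_{a\in A}\inf_{b\in B}d(a,b),\sup_{b\in B}\inf_{a\in A}d(a,b)\}$ is the Hausdorff metric. $F$ is (Hausdorff metric) sensitive, resp. accessible, if the same definitions hold with $d(f^n(x),f^n(y))$ replaced by $d_H(F^n(x),F^n(y))$; $F$ is (Hausdorff metric) Kato chaotic if it is both. Here $\mathbb{Z}^+=\{1,2,\dots\}$. *)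

From HB Require Import structures.
From mathcomp Require Import all_boot all_order all_algebra.
From mathcomp Require Import all_classical all_reals all_analysis.
Set Implicit Arguments. Unset Strict Implicit. Unset Printing Implicit Defensive.
Import Order.TTheory GRing.Theory Num.Theory.
Local Open Scope classical_set_scope.
Local Open Scope ring_scope.

Section KatoDefs.
Context {R : realType} {X : metricType R}.

Definition dist (x y : X) : R := mdist x y.

Definition sensitive (f : X -> X) : Prop :=
  exists delta : R, 0 < delta /\
    forall U : set X, open U -> U !=set0 ->
      exists x y : X, exists n : nat,
        [/\ U x, U y, (0 < n)%N & delta < dist (iter n f x) (iter n f y)].

Definition accessible (f : X -> X) : Prop :=
  forall eps : R, 0 < eps ->
    forall U V : set X, open U -> U !=set0 -> open V -> V !=set0 ->
      exists x y : X, exists n : nat,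
        [/\ U x, V y, (0 < n)%N & dist (iter n f x) (iter n f y) < eps].

Definition kato_chaotic (f : X -> X) : Prop := sensitive f /\ accessible f.

(* F^n(x) for F = {f1, f2}: all f_{i1} o ... o f_{in} (x); a word
   w = [:: i1; ...; in] (false = index 1, true = index 2) is applied by foldr,
   so i_n acts first. *)
Definition apply_word (f1 f2 : X -> X) (w : seq bool) (x : X) : X :=
  foldr (fun (i : bool) (y : X) => if i then f2 y else f1 y) x w.

Definition Fiter (f1 f2 : X -> X) (n : nat) (x : X) : set X :=
  [set apply_word f1 f2 w x | w in [set w : seq bool | size w = n]].

Definition hausdorff_dist (A B : set X) : R :=
  Num.max (sup [set inf [set dist a b | b in B] | a in A])
          (sup [set inf [set dist a b | a in A] | b in B]).

Definition HD (f1 f2 : X -> X) (n : nat) (x y : X) : R :=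
  hausdorff_dist (Fiter f1 f2 n x) (Fiter f1 f2 n y).

Definition H_sensitive (f1 f2 : X -> X) : Prop :=
  exists delta : R, 0 < delta /\
    forall U : set X, open U -> U !=set0 ->
      exists x y : X, exists n : nat,
        [/\ U x, U y, (0 < n)%N & delta < HD f1 f2 n x y].

Definition H_accessible (f1 f2 : X -> X) : Prop :=
  forall eps : R, 0 < eps ->
    forall U V : set X, open U -> U !=set0 -> open V -> V !=set0 ->
      exists x y : X, exists n : nat,
        [/\ U x, V y, (0 < n)%N & HD f1 f2 n x y < eps].

Definition H_kato_chaotic (f1 f2 : X -> X) : Prop :=
  H_sensitive f1 f2 /\ H_accessible f1 f2.

End KatoDefs.

From HB Require Import structures.
From mathcomp Require Import all_boot all_order all_algebra.
From mathcomp Require Import all_classical all_reals all_analysis.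
From mathcomp Require Import lra.
Import Order.TTheory GRing.Theory Num.Theory.
Local Open Scope classical_set_scope.
Local Open Scope ring_scope.

(** Since [f1] is constant with value [c] and [c] is fixed by [f2], a word
   applied to [x] yields [f2^n x] if it only uses [f2] and [c] otherwise, so
   [F^n(x) = {c, f2^n x}] for [n >= 1].  For two-point sets sharing the point
   [c], the Hausdorff distance of [{c, a}] and [{c, b}] lies between
   [d(a, b) / 2] (by the triangle inequality through [c]) and [d(a, b)], so
   sensitivity and accessibility of [f2] transfer to [F], the former with
   half the constant. *)

Section SupInfSet2.
Context {R : realType}.

Lemma sup_set2 (a b : R) : sup [set a; b] = Num.max a b.
Proof.
wlog ab : a b / a <= b.
  by move=> wlog_ab; case/orP: (le_total a b) => [/wlog_ab|/wlog_ab];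
    rewrite // setUC maxC.
by rewrite (max_idPr ab) sup_setU ?sup1 // => _ _ -> ->.
Qed.

Lemma inf_set2 (a b : R) : inf [set a; b] = Num.min a b.
Proof.
wlog ab : a b / a <= b.
  by move=> wlog_ab; case/orP: (le_total a b) => [/wlog_ab|/wlog_ab];
    rewrite // setUC minC.
by rewrite (min_idPl ab) inf_setU ?inf1 // => _ _ -> ->.
Qed.

End SupInfSet2.

Section HausdorffSet2.
Context {R : realType} {X : metricType R}.

Lemma hausdorff_dist_set2 (c a b : X) :
  hausdorff_dist [set c; a] [set c; b] =
  Num.max (Num.min (dist a c) (dist a b)) (Num.min (dist c b) (dist a b)).
Proof.
rewrite /hausdorff_dist !image_setU !image_set1 /= !image_setU !image_set1.
rewrite !inf_set2 !sup_set2 /dist !mdistxx !(min_idPl (mdist_ge0 _ _)).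
by rewrite !(max_idPr (_ : 0 <= Num.min _ _)) // le_min !mdist_ge0.
Qed.

Lemma hausdorff_dist_set2_le (c a b : X) :
  hausdorff_dist [set c; a] [set c; b] <= dist a b.
Proof. by rewrite hausdorff_dist_set2 ge_max !ge_min lexx !orbT. Qed.

Lemma hausdorff_dist_set2_ge (c a b : X) :
  dist a b / 2 <= hausdorff_dist [set c; a] [set c; b].
Proof.
have tri : dist a b <= dist a c + dist c b := metric_triangle _ _ _.
have ab2 : dist a b / 2 <= dist a b by have := mdist_ge0 a b; rewrite /dist; lra.
have [ac|cb] : dist a b / 2 <= dist a c \/ dist a b / 2 <= dist c b.
  by case: (lerP (dist a b / 2) (dist a c)) => ?; [left | right; lra].
- by rewrite hausdorff_dist_set2 le_max !le_min ac ab2.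
- by rewrite hausdorff_dist_set2 le_max !le_min cb ab2 orbT.
Qed.

End HausdorffSet2.

Section ConstantAndFixedPoint.
Context {R : realType} {X : metricType R}.
Variables (f1 f2 : X -> X) (c : X).
Hypotheses (f1_const : forall x, f1 x = c) (f2_fix : f2 c = c).

Lemma apply_word_const_fixed (w : seq bool) (x : X) :
  apply_word f1 f2 w x = if all id w then iter (size w) f2 x else c.
Proof.
rewrite /apply_word; elim: w => [|[] w IHw] /=; [done | | exact: f1_const].
by rewrite IHw; case: (all id w).
Qed.

Lemma Fiter_const_fixed (n : nat) (x : X) : (0 < n)%N ->
  Fiter f1 f2 n x = [set c; iter n f2 x].
Proof.
move=> n_gt0; apply/seteqP; split.
  by move=> _ [w /= <- <-]; rewrite apply_word_const_fixed; case: ifP => _; [right | left].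
move=> _ [->|->].
  exists (false :: nseq n.-1 true); last by rewrite apply_word_const_fixed.
  by rewrite /= size_nseq prednK.
exists (nseq n true); first exact: size_nseq.
by rewrite apply_word_const_fixed size_nseq all_nseq orbT.
Qed.

Lemma HD_const_fixed_le (n : nat) (x y : X) : (0 < n)%N ->
  HD f1 f2 n x y <= dist (iter n f2 x) (iter n f2 y).
Proof. by move=> n_gt0; rewrite /HD !Fiter_const_fixed // hausdorff_dist_set2_le. Qed.

Lemma HD_const_fixed_ge (n : nat) (x y : X) : (0 < n)%N ->
  dist (iter n f2 x) (iter n f2 y) / 2 <= HD f1 f2 n x y.
Proof. by move=> n_gt0; rewrite /HD !Fiter_const_fixed // hausdorff_dist_set2_ge. Qed.

Lemma H_sensitive_const_fixed : sensitive f2 -> H_sensitive f1 f2.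
Proof.
move=> [delta [delta_gt0 sens]]; exists (delta / 2); split; first by rewrite divr_gt0.
move=> U oU U0; have [x [y [n [Ux Uy n_gt0 far]]]] := sens U oU U0.
exists x, y, n; split => //; apply: lt_le_trans (HD_const_fixed_ge _ _ _ n_gt0).
by rewrite ltr_pM2r ?invr_gt0.
Qed.

Lemma H_accessible_const_fixed : accessible f2 -> H_accessible f1 f2.
Proof.
move=> acc eps eps_gt0 U V oU U0 oV V0.
have [x [y [n [Ux Vy n_gt0 close]]]] := acc eps eps_gt0 U V oU U0 oV V0.
by exists x, y, n; split => //; apply: le_lt_trans (HD_const_fixed_le _ _ _ n_gt0) _.
Qed.

End ConstantAndFixedPoint.

Theorem corollary3p12 (R : realType) (X : metricType R) (f1 f2 : X -> X) (c : X) :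
  compact [set: X] ->
  continuous f1 -> continuous f2 ->
  (forall x : X, f1 x = c) ->
  f2 c = c ->
  kato_chaotic f2 ->
  H_kato_chaotic f1 f2.
Proof.
move=> _ _ _ f1_const f2_fix [sens acc]; split.
- exact: H_sensitive_const_fixed.
- exact: H_accessible_const_fixed.
Qed.
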